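(* Let $M$ be the allocation output by the online greedy algorithm on an instance of Model 1 and let $N$ be an optimal offline allocation. For each day $d_i\in D$, let $X_i$ be the set of Type 2 agents that $N$ allocates on day $d_i$, and let $Y_i$ be the set of agents that $M$ allocates on day $d_i$. Then $|X_i|\le |Y_i|$.
   Context: Model 1: finite sets of agents $A$, categories $C$ and days $D=\{d_1,\dots,d_T\}$; each agent is eligible for a subset of categories; daily supply $s_i$ for day $d_i$; daily quota $q_{ik}$ for category $c_k$ on day $d_i$; each agent $a_j$ has a priority factor $\alpha_j>0$ and a set of available days; discount factor $\delta\in(0,1)$. An allocation maps each agent to a pair (eligible category, available day) or to $\emptyset$, with at most $q_{ik}$ agents getting $(c_k,d_i)$ and at most $s_i$ agents getting day $d_i$; agent $a_j$ allocated on day $d_i$ has utility $\alpha_j\delta^{i-1}$, and an optimal offline allocation maximizes total utility. The online greedy algorithm: on each day $d_i$, let $A_i$ be the agents available on $d_i$ not yet allocated; form the bipartite graph between $A_i$ and $C$ with an edge $(a_j,c_k)$ when $a_j$ is eligible for $c_k$, of weight $\alpha_j\delta^{i-1}$, agents of capacity $1$ and $c_k$ of capacity $q_{ik}$; compute a maximum-weight $b$-matching of size at most $s_i$ and allocate accordingly on day $d_i$. An agent allocated by $N$ is of Type 1 if $M$ allocates it on a strictly earlier day than $N$ does; every other agent allocated by $N$ is of Type 2. *)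

From HB Require Import structures.
From mathcomp Require Import all_boot all_order all_algebra.
Set Implicit Arguments. Unset Strict Implicit. Unset Printing Implicit Defensive.
Import Order.TTheory GRing.Theory Num.Theory.
Local Open Scope ring_scope.

(* An instance of Model 1.  Agents A, categories C, days 'I_T
   (day index i : 'I_T stands for d_{i+1}, so its discount is delta^i). *)
Record instance (R : realFieldType) (A C : finType) (T : nat) := Instance {
  elig   : A -> C -> bool;
  supply : 'I_T -> nat;
  quota  : 'I_T -> C -> nat;
  prio   : A -> R;
  avail  : A -> 'I_T -> bool;
  disc   : R
}.

Section Model.
Variables (R : realFieldType) (A C : finType) (T : nat) (I : instance R A C T).

Definition allocation := A -> option (C * 'I_T).

Definition alloc_day (f : allocation) (a : A) : option 'I_T := omap snd (f a).

Definition feasible (f : allocation) : Prop :=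
  [/\ forall a c d, f a = Some (c, d) -> elig I a c && avail I a d,
      forall d c, (#|[set a | f a == Some (c, d)]| <= quota I d c)%N
    & forall d, (#|[set a | alloc_day f a == Some d]| <= supply I d)%N].

Definition utility (f : allocation) : R :=
  \sum_(a : A) match f a with
               | Some (_, d) => prio I a * disc I ^+ d
               | None => 0 end.

Definition optimal (f : allocation) : Prop :=
  feasible f /\ forall g, feasible g -> utility g <= utility f.

Definition remaining (M : allocation) (i : 'I_T) : {set A} :=
  [set a | avail I a i &&
           [forall j : 'I_T, (j < i)%N ==> (alloc_day M a != Some j)]].

(* b-matching on day i between the agent set S (capacity 1) and categories
   (capacity q_{ik}), along eligibility edges, of size at most s_i. *)
Definition bmatching (i : 'I_T) (S : {set A}) (g : A -> option C) : Prop :=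
  [/\ forall a c, g a = Some c -> (a \in S) && elig I a c,
      forall c, (#|[set a | g a == Some c]| <= quota I i c)%N
    & (#|[set a | g a != None]| <= supply I i)%N].

Definition bweight (i : 'I_T) (g : A -> option C) : R :=
  \sum_(a : A) if g a is Some _ then prio I a * disc I ^+ i else 0.

Definition day_part (M : allocation) (i : 'I_T) : A -> option C :=
  fun a => match M a with
           | Some (c, d) => if d == i then Some c else None
           | None => None end.

Definition greedy_output (M : allocation) : Prop :=
  forall i : 'I_T,
    bmatching i (remaining M i) (day_part M i) /\
    forall g, bmatching i (remaining M i) g ->
      bweight i g <= bweight i (day_part M i).

Definition type1 (M N : allocation) (a : A) : bool :=
  match alloc_day M a, alloc_day N a with
  | Some dm, Some dn => (dm < dn)%N
  | _, _ => false end.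

Definition type2 (M N : allocation) (a : A) : bool :=
  (alloc_day N a != None) && ~~ type1 M N a.

End Model.

From HB Require Import structures.
From mathcomp Require Import all_boot all_order all_algebra.
Set Implicit Arguments. Unset Strict Implicit. Unset Printing Implicit Defensive.
Import Order.TTheory GRing.Theory Num.Theory.
Local Open Scope ring_scope.

(** The Type 2 agents that [N] serves on day [i] are still unallocated by [M]
    before day [i], so they form a b-matching on the greedy's day-[i] agent set.
    If it were larger than the greedy matching, an augmenting path would add one
    agent to the greedy matching while keeping all the others; since every agent
    has positive weight, this contradicts the maximality of the greedy matching. *)

Definition support (A C : finType) (h : A -> option C) : {set A} :=
  [set a | h a != None].

Lemma card_support (A C : finType) (h : A -> option C) :
  #|support h| = (\sum_c #|[set a | h a == Some c]|)%N.
Proof.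
rewrite -sum1_card; under [RHS]eq_bigr do rewrite -sum1_card.
rewrite (exchange_big_dep (fun a => h a != None)) /=; last first.
  by move=> c a _; rewrite inE => /eqP ->.
apply: eq_big => [a|a]; first by rewrite inE.
rewrite inE; case E: (h a) => [c0|] // _.
by rewrite (big_pred1 c0) // => c; rewrite inE E eq_sym.
Qed.

Section Augmentation.

Variables (A C : finType) (ok : A -> C -> bool) (q : C -> nat).

Definition assignment (h : A -> option C) : Prop :=
  (forall a c, h a = Some c -> ok a c) /\
  (forall c, #|[set a | h a == Some c]| <= q c)%N.

Definition reassign (h : A -> option C) (a : A) (c : C) : A -> option C :=
  fun x => if x == a then Some c else h x.

Lemma support_reassign h a c : support (reassign h a c) = a |: support h.
Proof.
by apply/setP => x; rewrite !inE /reassign; case: (x == a).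
Qed.

Lemma reassign_assignment h a c :
  assignment h -> ok a c -> h a != Some c ->
  (#|[set x | h x == Some c]| < q c)%N -> assignment (reassign h a c).
Proof.
move=> [h_ok h_q] ok_ac hac lt_c; split.
  by move=> x c'; rewrite /reassign; case: eqP => [-> [<-] | _]; [exact: ok_ac | exact: h_ok].
move=> c'; have [->|c'c] := eqVneq c' c.
  have -> : [set x | reassign h a c x == Some c] = a |: [set x | h x == Some c].
    by apply/setP => x; rewrite !inE /reassign; case: (x == a); rewrite ?eqxx.
  by rewrite cardsU1 inE hac.
apply: leq_trans (h_q c'); apply/subset_leq_card/subsetP => x; rewrite !inE /reassign.
by case: (x == a) => // /eqP [cc']; rewrite cc' eqxx in c'c.
Qed.

Lemma exists_undersaturated (g h : A -> option C) :
  (#|support h| < #|support g|)%N ->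
  exists c, (#|[set a | h a == Some c]| < #|[set a | g a == Some c]|)%N.
Proof.
rewrite !card_support => lt; apply/existsP; apply: contraLR lt.
rewrite negb_exists -leqNgt => /forallP le_hg.
by apply: leq_sum => c _; rewrite leqNgt le_hg.
Qed.

(* Augmenting path, built one reassignment at a time: each step either frees
   capacity for a new agent or makes [h] agree with [g] at one more agent. *)
Lemma augment g h :
  assignment g -> assignment h -> (#|support h| < #|support g|)%N ->
  exists h' b, [/\ assignment h', b \notin support h & support h' = b |: support h].
Proof.
move=> g_asg; have [n] := ubnP #|[set a | g a != h a]|.
elim: n h => // n IH h lt_n h_asg lt_hg.
have [c lt_c] := exists_undersaturated lt_hg.
have [g_ok g_q] := g_asg.
have /subsetPn [a] : ~~ ([set x | g x == Some c] \subset [set x | h x == Some c]).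
  by apply: contraTN lt_c => /subset_leq_card; rewrite -leqNgt.
rewrite !inE => /eqP ga hac.
have h1_asg := reassign_assignment h_asg (g_ok _ _ ga) hac (leq_trans lt_c (g_q c)).
case ha: (h a) => [c'|].
- have supp_h1 : support (reassign h a c) = support h.
    by rewrite support_reassign; apply/setUidPr; rewrite sub1set inE ha.
  have lt_h1 : (#|[set x | g x != reassign h a c x]| < n)%N.
    rewrite ltnS in lt_n; apply: (leq_trans _ lt_n); apply/proper_card/properP; split.
      apply/subsetP => x; rewrite !inE /reassign.
      by case: (eqVneq x a) => [->|//]; rewrite ga !eqxx.
    by exists a; rewrite !inE /reassign ga ?eqxx // eq_sym.
  rewrite -supp_h1 in lt_hg *.
  exact: IH lt_h1 h1_asg lt_hg.
- by exists (reassign h a c), a; rewrite support_reassign inE ha eqxx.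
Qed.

End Augmentation.

Section Greedy.

Variables (R : realFieldType) (A C : finType) (T : nat) (I : instance R A C T).

Lemma day_part_eq_some (f : allocation A C T) i a c :
  (day_part f i a == Some c) = (f a == Some (c, i)).
Proof.
rewrite /day_part; case: (f a) => [[c' d]|] //=.
case: (eqVneq d i) => [->|di]; apply/eqP/eqP => //; first by case=> ->.
  by case=> ->.
by case=> _ di'; rewrite di' eqxx in di.
Qed.

Lemma support_day_part (f : allocation A C T) i :
  support (day_part f i) = [set a | alloc_day f a == Some i].
Proof.
apply/setP => a; rewrite !inE /day_part /alloc_day; case: (f a) => [[c d]|] //=.
case: (eqVneq d i) => [->|di]; first by rewrite eqxx.
by apply/esym/eqP => -[di']; rewrite di' eqxx in di.
Qed.

Lemma bmatchingP i S g :
  bmatching I i S g <->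
  assignment (fun a c => (a \in S) && elig I a c) (quota I i) g /\
  (#|support g| <= supply I i)%N.
Proof. by split=> [[g_ok g_q g_s] | [[g_ok g_q] g_s]]. Qed.

Lemma bweightE i g :
  bweight I i g = \sum_(a in support g) prio I a * disc I ^+ i.
Proof.
by rewrite big_mkcond; apply: eq_bigr => a _; rewrite inE; case: (g a).
Qed.

Lemma bweight_augment i h h' b :
  (forall a, 0 < prio I a) -> 0 < disc I ->
  b \notin support h -> support h' = b |: support h ->
  bweight I i h < bweight I i h'.
Proof.
move=> prio_gt0 disc_gt0 b_new supp_h'.
by rewrite !bweightE supp_h' big_setU1 //= ltrDr mulr_gt0 ?exprn_gt0.
Qed.

Variables (M N : allocation A C T) (i : 'I_T).

Definition type2_day_part : A -> option C :=
  fun a => if type2 M N a then day_part N i a else None.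

Lemma support_type2_day_part :
  support type2_day_part = [set a | type2 M N a && (alloc_day N a == Some i)].
Proof.
apply/setP => a; rewrite !inE /type2_day_part; case: (type2 M N a) => //=.
by move/setP: (support_day_part N i) => /(_ a); rewrite !inE.
Qed.

Lemma type2_day_part_assignment :
  feasible I N ->
  assignment (fun a c => (a \in remaining I M i) && elig I a c) (quota I i)
             type2_day_part.
Proof.
move=> [N_ok N_q _]; split=> [a c|c].
  rewrite /type2_day_part; case t2: (type2 M N a) => // /eqP.
  rewrite day_part_eq_some => /eqP Na; have /andP [el av] := N_ok _ _ _ Na.
  rewrite el andbT inE av; apply/forallP => j; apply/implyP => ji; apply/eqP => Mj.
  by move: t2; rewrite /type2 /type1 Mj /alloc_day Na /= ji.
apply: leq_trans (N_q i c); apply/subset_leq_card/subsetP => a.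
by rewrite !inE /type2_day_part; case: (type2 M N a); rewrite ?day_part_eq_some.
Qed.

End Greedy.

Theorem lemma2 (R : realFieldType) (A C : finType) (T : nat)
  (I : instance R A C T) (M N : @allocation A C T) (i : 'I_T) :
  (forall a, 0 < prio I a) -> 0 < disc I < 1 ->
  greedy_output I M -> optimal I N ->
  (#|[set a | type2 M N a && (alloc_day N a == Some i)]|
     <= #|[set a | alloc_day M a == Some i]|)%N.
Proof.
move=> prio_gt0 /andP [disc_gt0 _] M_greedy [N_feas _].
have [/bmatchingP [h_asg _] h_max] := M_greedy i.
rewrite -support_type2_day_part -support_day_part leqNgt; apply/negP => lt.
have [h' [b [h'_asg b_new supp_h']]] :=
  augment (type2_day_part_assignment M i N_feas) h_asg lt.
have h'_bmatching : bmatching I i (remaining I M i) h'.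
  apply/bmatchingP; split=> //; rewrite supp_h' cardsU1 b_new.
  apply: leq_trans lt _; rewrite support_type2_day_part.
  have [_ _ N_s] := N_feas; apply: leq_trans (N_s i); apply/subset_leq_card/subsetP => a.
  by rewrite !inE => /andP [].
have := h_max _ h'_bmatching; rewrite leNgt => /negP; apply.
exact: bweight_augment b_new supp_h'.
Qed.
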